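(* Let $K$ be a field of characteristic $0$, let $S=K[x_1,\ldots,x_n]$ be graded by $\deg x_i=a_i>0$, and let $I\subset S$ be a homogeneous unmixed ideal of height two. Suppose that the symbolic Rees algebra $\bigoplus_{k\ge0} I^{(k)}t^k\subseteq S[t]$ is generated in degrees $1$ and $2$, and that $(I^{(2)})^2\subseteq I^3$. Then $(I^{(k-1)})^2\subseteq I^k$ for all $k\ge2$.
   Context: The $m$-th symbolic power is $I^{(m)}=\bigcup_{t\ge1} I^m:L^t$, where $L$ is the intersection of all associated, non-minimal prime ideals of $I^m$; $I^{(0)}=S$. *)

From HB Require Import structures.
From mathcomp Require Import all_boot all_order all_algebra.
From mathcomp Require Import mpoly.
Set Implicit Arguments. Unset Strict Implicit. Unset Printing Implicit Defensive.
Import Order.TTheory GRing.Theory.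
Local Open Scope ring_scope.

Section IdealDefs.
Variables (n : nat) (K : fieldType).
Local Notation S := {mpoly K[n]}.

Definition sub_set (A B : S -> Prop) : Prop := forall x, A x -> B x.
Definition set_eq (A B : S -> Prop) : Prop := forall x, A x <-> B x.
Definition full_set : S -> Prop := fun _ => True.

Definition is_ideal (I : S -> Prop) : Prop :=
  [/\ I 0, (forall x y, I x -> I y -> I (x + y)) & (forall r x, I x -> I (r * x))].

Definition ideal_mul (I J : S -> Prop) : S -> Prop := fun x =>
  exists s : seq (S * S),
    (forall p, p \in s -> I p.1 /\ J p.2) /\ x = \sum_(p <- s) p.1 * p.2.

Fixpoint ideal_pow (I : S -> Prop) (k : nat) : S -> Prop :=
  match k with
  | 0 => full_set
  | k'.+1 => ideal_mul (ideal_pow I k') I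
  end.

Definition ideal_sum (l : seq (S -> Prop)) : S -> Prop :=
  foldr (fun J acc x => exists y z, J y /\ acc z /\ x = y + z)
        (fun x => x = 0) l.

Definition colon (I J : S -> Prop) : S -> Prop := fun x => forall y, J y -> I (x * y).

Definition is_prime (P : S -> Prop) : Prop :=
  [/\ is_ideal P, ~ P 1 & (forall x y, P (x * y) -> P x \/ P y)].

Definition assoc_prime (J P : S -> Prop) : Prop :=
  is_prime P /\ exists f : S, set_eq P (colon J (fun y => y = f)).

Definition minimal_prime (J P : S -> Prop) : Prop :=
  [/\ is_prime P, sub_set J P &
      (forall Q, is_prime Q -> sub_set J Q -> sub_set Q P -> sub_set P Q)].

(* intersection of all associated, non-minimal primes of J (= S if none) *)
Definition embedded_intersection (J : S -> Prop) : S -> Prop := fun x =>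
  forall P, assoc_prime J P -> ~ minimal_prime J P -> P x.

Definition symbolic_power (I : S -> Prop) (m : nat) : S -> Prop :=
  match m with
  | 0 => full_set
  | _ => fun x => exists t : nat,
           colon (ideal_pow I m) (ideal_pow (embedded_intersection (ideal_pow I m)) t) x
  end.

Definition prime_height_ge (P : S -> Prop) (h : nat) : Prop :=
  exists c : nat -> S -> Prop,
    [/\ (forall i, (i <= h)%N -> is_prime (c i)),
        (forall i, (i < h)%N -> sub_set (c i) (c i.+1) /\ ~ sub_set (c i.+1) (c i))
      & set_eq (c h) P].

Definition prime_height (P : S -> Prop) (h : nat) : Prop :=
  prime_height_ge P h /\ ~ prime_height_ge P h.+1.

Definition ideal_height (I : S -> Prop) (h : nat) : Prop :=
  (exists P, is_prime P /\ sub_set I P /\ prime_height P h) /\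
  (forall P, is_prime P -> sub_set I P -> prime_height_ge P h).

Definition unmixed (I : S -> Prop) : Prop :=
  forall h, ideal_height I h -> forall P, assoc_prime I P -> prime_height P h.

Definition wdeg (a : 'I_n -> nat) (m : 'X_{1..n}) : nat := (\sum_(i < n) a i * m i)%N.

Definition whomog (a : 'I_n -> nat) (p : S) : Prop :=
  exists d : nat, forall m, m \in msupp p -> wdeg a m = d.

Definition homogeneous_ideal (a : 'I_n -> nat) (I : S -> Prop) : Prop :=
  forall f, I f -> exists s : seq (S * S),
    (forall p, p \in s -> I p.2 /\ whomog a p.2) /\ f = \sum_(p <- s) p.1 * p.2.

(* the symbolic Rees algebra is generated in degrees 1 and 2:
   I^(k) = sum_{i + 2j = k} (I^(1))^i (I^(2))^j for all k *)
Definition symb_rees_gen_deg12 (I : S -> Prop) : Prop :=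
  forall k : nat, set_eq (symbolic_power I k)
    (ideal_sum [seq ideal_mul (ideal_pow (symbolic_power I 1) (k - 2 * j))
                              (ideal_pow (symbolic_power I 2) j)
               | j <- iota 0 (k./2).+1]).

End IdealDefs.

From HB Require Import structures.
From mathcomp Require Import all_boot all_order all_algebra.
From mathcomp Require Import mpoly.
From mathcomp Require Import ring zify.
From Stdlib Require Import ClassicalEpsilon.
Import Order.TTheory GRing.Theory.

Set Implicit Arguments.
Unset Strict Implicit.

(* Every symbolic power I^(m), m > 0, of an unmixed ideal I lies in I.  If
   x L^t ⊆ I^m but x ∉ I, a maximal colon ideal Q = I : xg is an associated
   prime of I, so ht Q = ht I.  No embedded prime P of I^m lies in Q: a prime
   strictly between I^m and P would force ht Q > ht I.  Hence a maximal colon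
   ideal I^m : s with s ∉ Q puts s in every embedded prime, i.e. in L, and
   s^t ∈ L^t ⊆ Q contradicts s ∉ Q.  Maximal colon ideals exist because S is
   Noetherian (Dickson's lemma on leading monomials).
   Next, I^(2) ⊆ I and (I^(2))^2 ⊆ I^3 give (I^(2))^q ⊆ I^(q + ⌊q/2⌋).  Since
   I^(k-1) is a sum of ideals (I^(1))^(k-1-2j) (I^(2))^j, a product of two
   generators lies in I^(2k-2-q+⌊q/2⌋) with q = j + j' ≤ k - 1, and
   2k-2-q+⌊q/2⌋ ≥ k. *)

Lemma exists_argmin_after (h : nat -> nat) (a : nat) :
  exists j, a < j /\ forall j', a < j' -> h j <= h j'.
Proof.
suff H v j : a < j -> h j = v -> exists j, a < j /\ forall j', a < j' -> h j <= h j'.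
  exact: (H _ a.+1).
elim/ltn_ind: v j => v IH j aj hjv.
have [[j' [aj' lt_j'v]]|no_smaller] := classic (exists j', a < j' /\ h j' < v).
  exact: IH lt_j'v j' aj' erefl.
exists j; split=> // j' aj'; rewrite hjv leqNgt; apply/negP => lt_j'v.
by apply: no_smaller; exists j'.
Qed.

Lemma exists_nondecreasing_subseq (h : nat -> nat) : exists phi : nat -> nat,
  (forall i, phi i < phi i.+1) /\ (forall i, h (phi i) <= h (phi i.+1)).
Proof.
have [nxt nxtP] := choice _ (exists_argmin_after h).
exists (fun i => iter i.+1 nxt 0); split=> i; first exact: (nxtP _).1.
apply: (nxtP (iter i nxt 0)).2.
exact: ltn_trans (nxtP _).1 (nxtP _).1.
Qed.

Lemma exists_subseq_nondecreasing_on (T : eqType) (g : nat -> T -> nat) (s : seq T) :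
  exists phi : nat -> nat, {homo phi : i j / i < j} /\
    forall c, c \in s -> {homo (fun i => g (phi i) c) : i j / i <= j}.
Proof.
elim: s => [|c s [phi [phi_mono phi_le]]]; first by exists id; split.
have [psi [psi_lt psi_le]] := exists_nondecreasing_subseq (fun i => g (phi i) c).
have psi_mono : {homo psi : i j / i < j} := homo_ltn ltn_trans psi_lt.
exists (phi \o psi); split=> [i j /psi_mono/phi_mono //|c'].
rewrite inE => /predU1P[->|c's] i j ij; first exact: (homo_leq leqnn leq_trans psi_le).
by apply: phi_le => //; apply: ltnW_homo.
Qed.

Lemma dickson (n : nat) (f : nat -> 'X_{1..n}) :
  exists i j, i < j /\ (f i <= f j)%MM.
Proof.
have [phi [phi_mono phi_le]] :=
  exists_subseq_nondecreasing_on (fun i (c : 'I_n) => f i c) (enum 'I_n).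
exists (phi 0), (phi 1); split; first exact: phi_mono.
by apply/mnm_lepP => c; apply: phi_le; rewrite ?mem_enum.
Qed.

Local Open Scope ring_scope.

Section IdealAlgebra.
Variables (n : nat) (K : fieldType).
Local Notation S := {mpoly K[n]}.
Implicit Types (A B C D I J X : S -> Prop) (x y z r : S).

Lemma ideal_big (T : eqType) C (s : seq T) (F : T -> S) : is_ideal C ->
  (forall p, p \in s -> C (F p)) -> C (\sum_(p <- s) F p).
Proof.
case=> C0 CD _; elim: s => [|p s IH] Fs; first by rewrite big_nil.
rewrite big_cons; apply: CD; first by apply: Fs; rewrite mem_head.
by apply: IH => q qs; apply: Fs; rewrite inE qs orbT.
Qed.

Lemma ideal_mul_ideal A B : (forall r x, A x -> A (r * x)) -> is_ideal (ideal_mul A B).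
Proof.
move=> AM; split.
- by exists [::]; rewrite big_nil.
- move=> _ _ [s1 [H1 ->]] [s2 [H2 ->]]; exists (s1 ++ s2); split.
    by move=> p; rewrite mem_cat => /orP[/H1|/H2].
  by rewrite big_cat.
- move=> r _ [s [H ->]]; exists [seq (r * p.1, p.2) | p <- s]; split.
    by move=> _ /mapP[q qs ->] /=; have [Aq Bq] := H q qs; split=> //; apply: AM.
  by rewrite big_map mulr_sumr; apply: eq_bigr => p _; rewrite mulrA.
Qed.

Lemma ideal_pow_ideal A k : is_ideal (ideal_pow A k).
Proof. by elim: k => [|k [_ _ IHM]] //=; apply: ideal_mul_ideal. Qed.

Lemma ideal_mul_mem A B x y : A x -> B y -> ideal_mul A B (x * y).
Proof.
move=> Ax By; exists [:: (x, y)]; split; last by rewrite big_seq1.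
by move=> p; rewrite inE => /eqP->.
Qed.

Lemma ideal_mulr_sub C A B x y : is_ideal C ->
  (forall a b, A a -> B b -> C (x * (a * b))) -> ideal_mul A B y -> C (x * y).
Proof.
move=> idC H [s [Hs ->]]; rewrite mulr_sumr; apply: ideal_big => // p ps.
by have [] := Hs p ps; apply: H.
Qed.

Lemma ideal_mull_sub C A B x y : is_ideal C ->
  (forall a b, A a -> B b -> C (a * b * y)) -> ideal_mul A B x -> C (x * y).
Proof.
move=> idC H Ax; rewrite mulrC; apply: (ideal_mulr_sub idC) Ax => a b Aa Bb.
by rewrite mulrC; apply: H.
Qed.

Lemma ideal_mul_sub C A B : is_ideal C ->
  (forall a b, A a -> B b -> C (a * b)) -> sub_set (ideal_mul A B) C.
Proof.
move=> idC H x Ax; rewrite -[x]mul1r; apply: (ideal_mulr_sub idC) Ax => a b Aa Bb.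
by rewrite mul1r; apply: H.
Qed.

Lemma ideal_mulS A A' B B' : sub_set A A' -> sub_set B B' ->
  sub_set (ideal_mul A B) (ideal_mul A' B').
Proof.
move=> sA sB _ [s [Hs ->]]; exists s; split=> // p ps.
by have [Ap Bp] := Hs p ps; split; [apply: sA | apply: sB].
Qed.

Lemma ideal_mul_subl A B : is_ideal A -> sub_set (ideal_mul A B) A.
Proof.
move=> idA; apply: ideal_mul_sub => // a b Aa _.
by rewrite mulrC; case: idA => _ _; apply.
Qed.

Lemma ideal_powD A p q x y : ideal_pow A p x -> ideal_pow A q y ->
  ideal_pow A (p + q) (x * y).
Proof.
elim: q y => [|q IH] y Ax Ay.
  by rewrite addn0 mulrC; case: (ideal_pow_ideal A p) => _ _; apply.
rewrite addnS; apply: (ideal_mulr_sub (ideal_pow_ideal A (p + q).+1)) Ay => a b Aa Ab.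
by rewrite mulrA; apply: ideal_mul_mem => //; apply: IH.
Qed.

Lemma ideal_powS A B k : sub_set A B -> sub_set (ideal_pow A k) (ideal_pow B k).
Proof. by move=> sAB; elim: k => [|k IH] //=; apply: ideal_mulS. Qed.

Lemma ideal_pow_leq A p q : (p <= q)%N -> sub_set (ideal_pow A q) (ideal_pow A p).
Proof.
move=> /subnK <- x; rewrite addnC; elim: (q - p)%N x => [|d IH] x; first by rewrite addn0.
by rewrite addnS => /(ideal_mul_subl (ideal_pow_ideal A _)) /IH.
Qed.

Lemma ideal_pow1_sub I : is_ideal I -> sub_set (ideal_pow I 1) I.
Proof. by move=> idI; apply: ideal_mul_sub => // a b _; case: idI => _ _; apply. Qed.

Lemma ideal_mul_interchange A B C D x y : (forall r a, A a -> A (r * a)) ->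
  ideal_mul A B x -> ideal_mul C D y ->
  ideal_mul (ideal_mul A C) (ideal_mul B D) (x * y).
Proof.
move=> AM ABx CDy; have [_ _ ACM] := ideal_mul_ideal C AM.
have idZ := ideal_mul_ideal (ideal_mul B D) ACM.
apply: (ideal_mull_sub idZ) ABx => a b Aa Bb.
apply: (ideal_mulr_sub idZ) CDy => c d Cc Dd.
have -> : a * b * (c * d) = (a * c) * (b * d) by ring.
by apply: ideal_mul_mem; apply: ideal_mul_mem.
Qed.

Lemma ideal_pow_exp A y t : A y -> ideal_pow A t (y ^+ t).
Proof. by move=> Ay; elim: t => [|t IH] //=; rewrite exprSr; apply: ideal_mul_mem. Qed.

Lemma prime_exp P y t : is_prime P -> P (y ^+ t) -> P y.
Proof.
case=> _ P1 Pmul; elim: t => [|t IH]; first by rewrite expr0.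
by rewrite exprS => /Pmul[|/IH].
Qed.

Lemma prime_sub_pow P I t : is_prime P -> sub_set (ideal_pow I t) P -> sub_set I P.
Proof. by move=> pP sIP y Iy; apply: (prime_exp (t := t) pP); apply/sIP/ideal_pow_exp. Qed.

Lemma colon1E X f z : colon X (fun y => y = f) z <-> X (z * f).
Proof. by split=> [H|H y ->]; [apply: H|]. Qed.

Lemma colon_ideal X J : is_ideal X -> is_ideal (colon X J).
Proof.
case=> X0 XD XM; split.
- by move=> y _; rewrite mul0r.
- by move=> x y Cx Cy z Jz; rewrite mulrDl; apply: XD; [apply: Cx|apply: Cy].
- by move=> r x Cx z Jz; rewrite -mulrA; apply: XM; apply: Cx.
Qed.

Lemma ideal_sum_sub (T : eqType) (s : seq T) (F : T -> S -> Prop) (P : S -> Prop) :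
  P 0 -> (forall x y, P x -> P y -> P (x + y)) ->
  (forall j, j \in s -> sub_set (F j) P) -> sub_set (ideal_sum (map F s)) P.
Proof.
move=> P0 PD; elim: s => [|j s IH] FP x /=; first by move->.
move=> [y [z [Fy [Sz ->]]]]; apply: PD; first by apply: (FP j) => //; rewrite mem_head.
by apply: IH => // j' j's; apply: FP; rewrite inE j's orbT.
Qed.

Lemma ideal_sum_mul_sub (T : eqType) (s : seq T) (F : T -> S -> Prop) C :
  is_ideal C ->
  (forall j j' y z, j \in s -> j' \in s -> F j y -> F j' z -> C (y * z)) ->
  forall y z, ideal_sum (map F s) y -> ideal_sum (map F s) z -> C (y * z).
Proof.
move=> [C0 CD _] FC y z Sy Sz.
pose P y := forall z, ideal_sum (map F s) z -> C (y * z).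
apply: (@ideal_sum_sub _ s F P _ _ _ y Sy z Sz).
- by move=> z0 _; rewrite mul0r.
- by move=> y1 y2 P1 P2 z0 Sz0; rewrite mulrDl; apply: CD; [apply: P1 | apply: P2].
move=> j js y0 Fy0 z0; apply: (@ideal_sum_sub _ s F (fun z => C (y0 * z))).
- by rewrite mulr0.
- by move=> z1 z2 C1 C2; rewrite mulrDr; apply: CD.
by move=> j' j's z1 Fz1; apply: FC js j's Fy0 Fz1.
Qed.

Lemma ideal_pow2_sub Y C : is_ideal C ->
  (forall y z, Y y -> Y z -> C (y * z)) -> sub_set (ideal_pow Y 2) C.
Proof.
move=> idC YC; apply: ideal_mul_sub => // u z Yu Yz.
apply: (ideal_mull_sub idC) Yu => r y _ Yy.
by rewrite -mulrA; case: idC => _ _; apply; apply: YC.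
Qed.

End IdealAlgebra.

Section Noetherian.
Variables (n : nat) (K : fieldType).
Local Notation S := {mpoly K[n]}.
Implicit Types (J : S -> Prop) (m : 'X_{1..n}).

Definition mleads J m := exists f, [/\ J f, f != 0 & mlead f = m].

Lemma mpolyX_neq0 m : ('X_[m] : S) != 0.
Proof.
apply/eqP => /(congr1 (mcoeff m)); rewrite mcoeffX eqxx mcoeff0.
by apply/eqP; apply: oner_neq0.
Qed.

Lemma mleads_le J m m' : is_ideal J -> mleads J m -> (m <= m')%MM -> mleads J m'.
Proof.
case=> _ _ JM [f [Jf f_neq0 fm]] le_mm'.
exists ('X_[m' - m] * f); split; first exact: JM.
  by rewrite mulf_neq0 // mpolyX_neq0.
by rewrite mleadM ?mpolyX_neq0 // mleadXm fm submK.
Qed.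

(* Subtracting from f ∈ J' a multiple of some g ∈ J with the same leading monomial
   lowers the leading monomial. *)
Lemma ideal_sub_of_mleads J J' : is_ideal J -> is_ideal J' -> sub_set J J' ->
  (forall m, mleads J' m -> mleads J m) -> sub_set J' J.
Proof.
move=> [J0 JD JM] [_ J'D J'M] sJJ' sLM.
suff H m f : J' f -> f != 0 -> mlead f = m -> J f.
  by move=> f J'f; have [->|f_neq0] := eqVneq f 0; [apply: J0 | apply: H J'f f_neq0 erefl].
elim/(well_founded_ind (@ltom_wf n)): m f => m IH f J'f f_neq0 fm.
have [g [Jg g_neq0 gm]] : mleads J m by apply: sLM; exists f.
pose c := mleadc f / mleadc g; pose h := f - c *: g.
have gc_neq0 : mleadc g != 0 by rewrite mleadc_eq0.
have fc_neq0 : mleadc f != 0 by rewrite mleadc_eq0.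
have c_neq0 : c != 0 by rewrite mulf_neq0 ?invr_eq0.
have Jcg : J (c *: g) by rewrite -mul_mpolyC; apply: JM.
have J'h : J' h by rewrite /h -scaleNr -mul_mpolyC; apply/J'D/J'M/sJJ'.
have -> : f = h + c *: g by rewrite subrK.
have [->|h_neq0] := eqVneq h 0; first by rewrite add0r.
apply: JD => //; apply: (IH (mlead h)) => //.
have hm0 : h@_m = 0 by rewrite mcoeffB mcoeffZ -{1}fm -gm divfK // subrr.
rewrite lt_neqAle; apply/andP; split.
  by apply/eqP => hm; move: h_neq0; rewrite -mleadc_eq0 hm hm0 eqxx.
by have := mleadB_le f (c *: g); rewrite mleadZ // gm fm joinxx.
Qed.

Lemma ideal_chain_stationary (C : nat -> S -> Prop) :
  (forall i, is_ideal (C i)) -> (forall i, sub_set (C i) (C i.+1)) ->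
  exists i, sub_set (C i.+1) (C i).
Proof.
move=> idC sC; apply: NNPP => no_stop.
have new_mlead i : exists m, mleads (C i.+1) m /\ ~ mleads (C i) m.
  apply: NNPP => H; apply: no_stop; exists i.
  apply: ideal_sub_of_mleads (sC i) _ => // m Lm.
  by apply: NNPP => nLm; apply: H; exists m.
have [mm mmP] := choice _ new_mlead.
have [i [j [lt_ij le_mm]]] := dickson mm.
apply: (mmP j).2; apply: mleads_le le_mm => //.
have [f [Cf f_neq0 fm]] := (mmP i).1; exists f; split=> //.
rewrite -(subnK lt_ij); elim: (j - i.+1)%N => [//|d IH].
by rewrite addSn; apply: sC.
Qed.

Lemma ideal_family_has_maximal (F : (S -> Prop) -> Prop) :
  (forall N, F N -> is_ideal N) -> (exists N, F N) ->
  exists M, F M /\ forall N, F N -> sub_set M N -> sub_set N M.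
Proof.
move=> Fid [M0 FM0]; apply: NNPP => no_max.
have step (M : {M | F M}) : exists N : {M | F M},
    sub_set (sval M) (sval N) /\ ~ sub_set (sval N) (sval M).
  case: M => M FM /=; apply: NNPP => H; apply: no_max; exists M; split=> // N FN sMN.
  by apply: NNPP => nsNM; apply: H; exists (exist _ N FN).
have [nxt nxtP] := choice _ step.
pose C i := sval (iter i nxt (exist _ M0 FM0)).
have [i] := @ideal_chain_stationary C (fun i => Fid _ (svalP _)) (fun i => (nxtP _).1).
exact: (nxtP _).2.
Qed.

End Noetherian.

Section SymbolicPower.
Variables (n : nat) (K : fieldType).
Local Notation S := {mpoly K[n]}.
Implicit Types (I X P Q : S -> Prop) (x : S).

Lemma prime_height_ge_extend Q' Q P h : prime_height_ge Q' h -> is_prime Q ->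
  sub_set Q' P -> sub_set P Q -> ~ sub_set P Q' -> prime_height_ge Q h.+1.
Proof.
move=> [c [cP c_lt cQ']] pQ sQ'P sPQ nsPQ'.
exists (fun i => if (i <= h)%N then c i else Q); split.
- by move=> i; case: ifP => // hi _; apply: cP.
- move=> i; rewrite ltnS => le_ih; rewrite le_ih.
  case: ltngtP le_ih => [lt_ih _|//|-> _]; first exact: c_lt.
  split; first by move=> y /cQ' /sQ'P /sPQ.
  by move=> sQc; apply: nsPQ' => y /sPQ /sQc /cQ'.
- by rewrite ltnn.
Qed.

Lemma maximal_colon_prime I x : is_ideal I -> ~ I x ->
  exists g, is_prime (colon I (fun y => y = x * g)).
Proof.
move=> idI nIx; have [_ _ IM] := idI.
pose F N := exists g, ~ I (x * g) /\ N = colon I (fun y => y = x * g).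
have [_ [[g [nIxg ->]] Mmax]] :
    exists M, F M /\ forall N, F N -> sub_set M N -> sub_set N M.
  apply: ideal_family_has_maximal; first by move=> N [g [_ ->]]; apply: colon_ideal.
  by exists (colon I (fun y => y = x * 1)), 1; rewrite mulr1.
exists g; split; first exact: colon_ideal.
  by move/colon1E; rewrite mul1r.
move=> a b /colon1E Iabxg.
have [Qa|nQa] := classic (colon I (fun y => y = x * g) a); [by left | right].
have Fga : F (colon I (fun y => y = x * (g * a))).
  exists (g * a); split=> // Ixga; apply: nQa; apply/colon1E.
  by have -> : a * (x * g) = x * (g * a) by ring.
apply: (Mmax _ Fga).
  move=> z /colon1E Izxg; apply/colon1E.
  have -> : z * (x * (g * a)) = a * (z * (x * g)) by ring.
  exact: IM.
apply/colon1E; have -> : b * (x * (g * a)) = a * b * (x * g) by ring.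
exact: Iabxg.
Qed.

Lemma assoc_prime_sub X P : is_ideal X -> assoc_prime X P -> sub_set X P.
Proof.
case=> _ _ XM [_ [f Pf]] y Xy; apply/Pf => _ ->.
by rewrite mulrC; apply: XM.
Qed.

Lemma nonminimal_prime_not_sub X P Q h : is_prime P -> sub_set X P ->
  ~ minimal_prime X P ->
  (forall Q', is_prime Q' -> sub_set X Q' -> prime_height_ge Q' h) ->
  is_prime Q -> ~ prime_height_ge Q h.+1 -> ~ sub_set P Q.
Proof.
move=> pP sXP nminP htX pQ htQ sPQ; apply: nminP; split=> // Q' pQ' sXQ' sQ'P.
apply: NNPP => nsPQ'; apply: htQ.
exact: prime_height_ge_extend (htX Q' pQ' sXQ') pQ sQ'P sPQ nsPQ'.
Qed.

(* A maximal colon ideal X : s with s outside Q contains the annihilator f of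
   every embedded prime P = X : f, since it equals X : su for any u in P \ Q. *)
Lemma embedded_intersection_notin X Q : is_ideal X -> is_prime Q ->
  (forall P, assoc_prime X P -> ~ minimal_prime X P -> exists u, P u /\ ~ Q u) ->
  exists s, ~ Q s /\ embedded_intersection X s.
Proof.
move=> idX pQ avoidQ; have [_ _ XM] := idX; have [_ nQ1 Qmul] := pQ.
pose F N := exists s, ~ Q s /\ N = colon X (fun y => y = s).
have [_ [[s [nQs ->]] Mmax]] :
    exists M, F M /\ forall N, F N -> sub_set M N -> sub_set N M.
  apply: ideal_family_has_maximal; first by move=> N [s [_ ->]]; apply: colon_ideal.
  by exists (colon X (fun y => y = 1)), 1.
exists s; split=> // P aP nminP; have [_ [f Pf]] := aP.
have [u [Pu nQu]] := avoidQ P aP nminP.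
have Xuf : X (u * f) := (Pf u).1 Pu f erefl.
have Fsu : F (colon X (fun y => y = s * u)) by exists (s * u); split=> // /Qmul[].
have /colon1E Xfs : colon X (fun y => y = s) f.
  apply: (Mmax _ Fsu).
    by move=> z /colon1E Xzs; apply/colon1E; rewrite mulrA mulrC; apply: XM.
  apply/colon1E; have -> : f * (s * u) = s * (u * f) by ring.
  exact: XM.
by apply/Pf => _ ->; rewrite mulrC.
Qed.

Lemma symbolic_power_sub I h m : is_ideal I -> unmixed I -> ideal_height I h ->
  sub_set (symbolic_power I m.+1) I.
Proof.
move=> idI unmI htI x [t xLX]; apply: NNPP => nIx; have [_ _ IM] := idI.
set X := ideal_pow I m.+1 in xLX.
have idX : is_ideal X := ideal_pow_ideal I m.+1.
have sXI : sub_set X I.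
  by move=> y /(@ideal_pow_leq _ _ I 1 m.+1 isT) /(ideal_pow1_sub idI).
have [g pQ] := maximal_colon_prime idI nIx; set Q := colon I _ in pQ.
have [_ htQ] : prime_height Q h.
  by apply: (unmI h htI); split=> //; exists (x * g).
have avoidQ P : assoc_prime X P -> ~ minimal_prime X P -> exists u, P u /\ ~ Q u.
  move=> aP nminP; apply: NNPP => noU.
  apply: (nonminimal_prime_not_sub aP.1 (assoc_prime_sub idX aP) nminP _ pQ htQ).
    by move=> Q' pQ' sXQ'; apply: htI.2 pQ' (prime_sub_pow pQ' sXQ').
  by move=> u Pu; apply: NNPP => nQu; apply: noU; exists u.
have [s [nQs Ls]] := embedded_intersection_notin idX pQ avoidQ.
apply: nQs; apply: (prime_exp (t := t) pQ); apply/colon1E.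
have -> : s ^+ t * (x * g) = g * (x * s ^+ t) by ring.
by apply/IM/sXI/xLX/ideal_pow_exp.
Qed.

End SymbolicPower.

Section GeneratorProducts.
Variables (n : nat) (K : fieldType).
Local Notation S := {mpoly K[n]}.
Implicit Types (I J : S -> Prop) (y z : S).

Lemma ideal_pow_sub_of_sqr I J : sub_set J I ->
  sub_set (ideal_pow J 2) (ideal_pow I 3) ->
  forall q, sub_set (ideal_pow J q) (ideal_pow I (q + q./2)).
Proof.
move=> sJI sJ2I3; elim/ltn_ind => -[|[|q]] IH //; first exact: ideal_powS.
have -> : (q.+2 + q.+2./2 = q + q./2 + 3)%N by rewrite /=; lia.
apply: ideal_mul_sub (ideal_pow_ideal I _) _ => u b Ju Jb.
apply: (ideal_mull_sub (ideal_pow_ideal I _)) Ju => v c Jv Jc.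
rewrite -mulrA; apply: ideal_powD; first exact: IH Jv.
by apply/sJ2I3/ideal_mul_mem => //; rewrite -[c]mul1r; apply: ideal_mul_mem.
Qed.

Lemma generator_mul_sub I J1 J2 p p' j j' y z : sub_set J1 I ->
  (forall q, sub_set (ideal_pow J2 q) (ideal_pow I (q + q./2))) ->
  ideal_mul (ideal_pow J1 p) (ideal_pow J2 j) y ->
  ideal_mul (ideal_pow J1 p') (ideal_pow J2 j') z ->
  ideal_pow I (p + p' + (j + j' + (j + j')./2)) (y * z).
Proof.
move=> sJ1I J2pow Fy Fz; have [_ _ J1pM] := ideal_pow_ideal J1 p.
apply: ideal_mul_sub (ideal_pow_ideal I _) _ _ (ideal_mul_interchange J1pM Fy Fz).
move=> a b J1a J2b; apply: ideal_powD.
  apply: ideal_mul_sub (ideal_pow_ideal I _) _ _ J1a => u v J1u J1v.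
  by apply: ideal_powD; [move: J1u | move: J1v]; apply: ideal_powS.
apply: J2pow; apply: ideal_mul_sub (ideal_pow_ideal J2 _) _ _ J2b.
exact: ideal_powD.
Qed.

End GeneratorProducts.

Lemma generator_exponent_ge k j j' : (2 <= k)%N ->
  (j <= k.-1./2)%N -> (j' <= k.-1./2)%N ->
  (k <= k.-1 - 2 * j + (k.-1 - 2 * j') + (j + j' + (j + j')./2))%N.
Proof.
rewrite !geq_half_double => k2 hj hj'.
have := odd_double_half (j + j'); case: odd => /=; lia.
Qed.

Theorem proposition2p9 (K : fieldType) (n : nat) (a : 'I_n -> nat)
  (I : {mpoly K[n]} -> Prop) :
  [pchar K] =i pred0 ->
  (forall i, (0 < a i)%N) ->
  is_ideal I ->
  homogeneous_ideal a I ->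
  unmixed I ->
  ideal_height I 2 ->
  symb_rees_gen_deg12 I ->
  sub_set (ideal_pow (symbolic_power I 2) 2) (ideal_pow I 3) ->
  forall k : nat, (2 <= k)%N ->
    sub_set (ideal_pow (symbolic_power I k.-1) 2) (ideal_pow I k).
Proof.
move=> _ _ idI _ unmI htI gen12 sq k k2.
have sub1 := symbolic_power_sub (m := 0) idI unmI htI.
have pow2 := ideal_pow_sub_of_sqr (symbolic_power_sub (m := 1) idI unmI htI) sq.
apply: ideal_pow2_sub (ideal_pow_ideal I k) _ => y z /(gen12 _) Sy /(gen12 _) Sz.
apply: ideal_sum_mul_sub (ideal_pow_ideal I k) _ y z Sy Sz => j j' y' z'.
rewrite !mem_iota !add0n !ltnS => hj hj' Fy Fz.
apply: ideal_pow_leq (generator_exponent_ge k2 hj hj') _ _.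
exact: generator_mul_sub sub1 pow2 Fy Fz.
Qed.
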